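(* Let $S$ and $T$ be left fairly amenable semigroups. Then the direct product $S\times T$ (with componentwise multiplication) is left fairly amenable. The same holds with ''right'' in place of ''left''.
   Context: For a semigroup $U$, $s\in U$, $A\subseteq U$: $s$ acts injectively on the left (right) of $A$ if $a\mapsto sa$ ($a\mapsto as$) is injective on $A$. A finitely-additive probability measure on $U$ is $\mu:\mathcal P(U)\to[0,1]$ with $\mu(U)=1$, additive on disjoint sets; it is left fairly invariant if $\mu(sA)=\mu(A)$ whenever $s$ acts injectively on the left of $A$ (right fairly invariant analogously with $As$). $U$ is left (right) fairly amenable if it admits a left (right) fairly invariant finitely-additive probability measure. *)

From Stdlib Require Import Reals.
Open Scope R_scope.
Set Implicit Arguments.

Definition is_semigroup (U : Type) (op : U -> U -> U) : Prop :=
  forall x y z, op x (op y z) = op (op x y) z.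

Definition disjoint_sets (U : Type) (A B : U -> Prop) : Prop :=
  forall x, A x -> B x -> False.

Definition set_union (U : Type) (A B : U -> Prop) : U -> Prop :=
  fun x => A x \/ B x.

Definition fa_prob_measure (U : Type) (mu : (U -> Prop) -> R) : Prop :=
  (forall A, 0 <= mu A <= 1) /\
  mu (fun _ => True) = 1 /\
  (forall A B, disjoint_sets A B -> mu (set_union A B) = mu A + mu B).

Definition left_translate (U : Type) (op : U -> U -> U) (s : U) (A : U -> Prop)
  : U -> Prop := fun y => exists a, A a /\ y = op s a.
Definition right_translate (U : Type) (op : U -> U -> U) (s : U) (A : U -> Prop)
  : U -> Prop := fun y => exists a, A a /\ y = op a s.

Definition acts_inj_left (U : Type) (op : U -> U -> U) (s : U) (A : U -> Prop) : Prop :=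
  forall a b, A a -> A b -> op s a = op s b -> a = b.
Definition acts_inj_right (U : Type) (op : U -> U -> U) (s : U) (A : U -> Prop) : Prop :=
  forall a b, A a -> A b -> op a s = op b s -> a = b.

Definition left_fairly_invariant (U : Type) (op : U -> U -> U)
  (mu : (U -> Prop) -> R) : Prop :=
  forall s A, acts_inj_left op s A -> mu (left_translate op s A) = mu A.
Definition right_fairly_invariant (U : Type) (op : U -> U -> U)
  (mu : (U -> Prop) -> R) : Prop :=
  forall s A, acts_inj_right op s A -> mu (right_translate op s A) = mu A.

Definition left_fairly_amenable (U : Type) (op : U -> U -> U) : Prop :=
  exists mu, fa_prob_measure mu /\ left_fairly_invariant op mu.
Definition right_fairly_amenable (U : Type) (op : U -> U -> U) : Prop :=
  exists mu, fa_prob_measure mu /\ right_fairly_invariant op mu.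

Definition prod_op (S T : Type) (opS : S -> S -> S) (opT : T -> T -> T)
  (x y : S * T) : S * T := (opS (fst x) (fst y), opT (snd x) (snd y)).

From Stdlib Require Import Reals ClassicalEpsilon FunctionalExtensionality
  PropExtensionality Classical Lra Lia List.
Open Scope R_scope.

(* Given left fairly invariant finitely additive probabilities muU on U and
   muV on V, the witness for U x V is the product measure
       nu(C) = int muV(C_a) dmuU(a),   C_a = { b | (a, b) in C },
   where the integral is the lower integral of a [0,1]-valued function
   (supremum of the elementary integrals of simple functions below it).

   Left invariance of nu under (s,t) on a set C where (s,t) acts injectively:
   C splits into pieces over the transversals of its projection, on each of
   which s acts injectively so invariance follows by change of variables; the
   remaining layer has negligible measure by the counting lemmas on peelings.
   The right case is the left case for the opposite semigroups. *)


Lemma set_ext {U : Type} (A B : U -> Prop) : (forall x, A x <-> B x) -> A = B.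
Proof.
  intro H; apply functional_extensionality; intro x.
  apply propositional_extensionality; auto.
Qed.

Lemma mu_ext {U : Type} (mu : (U -> Prop) -> R) (A B : U -> Prop) :
  (forall x, A x <-> B x) -> mu A = mu B.
Proof. intro H; rewrite (set_ext A B H); reflexivity. Qed.

Definition image {U V : Type} (f : U -> V) (A : U -> Prop) : V -> Prop :=
  fun y => exists a, A a /\ y = f a.

Definition injective_on {U V : Type} (f : U -> V) (A : U -> Prop) : Prop :=
  forall a b, A a -> A b -> f a = f b -> a = b.

(* mu(f(Y)) = mu(Y) whenever f is injective on Y.  Left fair invariance of mu
   is exactly this property for every left translation x |-> s x. *)
Definition image_invariant {U : Type} (mu : (U -> Prop) -> R) (f : U -> U) : Prop :=
  forall Y, injective_on f Y -> mu (image f Y) = mu Y.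

Section FiniteAdditivity.
Context {U : Type} (mu : (U -> Prop) -> R) (Hmu : fa_prob_measure mu).

Lemma mu_bounds A : 0 <= mu A <= 1.
Proof. apply Hmu. Qed.

Lemma mu_full : mu (fun _ => True) = 1.
Proof. apply Hmu. Qed.

Lemma mu_disj (A B : U -> Prop) :
  (forall x, A x -> B x -> False) -> mu (fun x => A x \/ B x) = mu A + mu B.
Proof. apply Hmu. Qed.

Lemma mu_null (A : U -> Prop) : (forall x, ~ A x) -> mu A = 0.
Proof.
  intro HA. assert (E : mu (fun x => A x \/ A x) = mu A + mu A)
    by (apply mu_disj; intros x Ax; destruct (HA x Ax)).
  rewrite (mu_ext mu _ A) in E by tauto. lra.
Qed.

Lemma mu_split (A D : U -> Prop) :
  mu A = mu (fun x => A x /\ D x) + mu (fun x => A x /\ ~ D x).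
Proof.
  rewrite <- mu_disj by tauto.
  apply mu_ext; intro x; destruct (classic (D x)); tauto.
Qed.

Lemma mu_mono (A B : U -> Prop) : (forall x, A x -> B x) -> mu A <= mu B.
Proof.
  intro HAB. rewrite (mu_split B A), (mu_ext mu (fun x => B x /\ A x) A) by firstorder.
  destruct (mu_bounds (fun x => B x /\ ~ A x)); lra.
Qed.

End FiniteAdditivity.

Definition simple (U : Type) := list (R * (U -> Prop)).

Definition ind {U : Type} (A : U -> Prop) (x : U) : R :=
  if excluded_middle_informative (A x) then 1 else 0.

Fixpoint ev {U : Type} (L : simple U) (x : U) : R :=
  match L with nil => 0 | (c, A) :: L' => c * ind A x + ev L' x end.

Fixpoint Phi {U : Type} (mu : (U -> Prop) -> R) (L : simple U) : R :=
  match L with nil => 0 | (c, A) :: L' => c * mu A + Phi mu L' end.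

Definition mapsets {U V : Type} (g : (U -> Prop) -> V -> Prop) (L : simple U)
  : simple V := map (fun p => (fst p, g (snd p))) L.

Definition restr {U : Type} (L : simple U) (D : U -> Prop) : simple U :=
  mapsets (fun A x => A x /\ D x) L.

Lemma ind_in {U : Type} (A : U -> Prop) x : A x -> ind A x = 1.
Proof. unfold ind; destruct excluded_middle_informative; tauto. Qed.

Lemma ind_out {U : Type} (A : U -> Prop) x : ~ A x -> ind A x = 0.
Proof. unfold ind; destruct excluded_middle_informative; tauto. Qed.

Lemma ev_mapsets_in {U V : Type} (g : (U -> Prop) -> V -> Prop) L x y :
  (forall A, g A y <-> A x) -> ev (mapsets g L) y = ev L x.
Proof.
  intro H; induction L as [|[c A] L IH]; simpl; auto.
  rewrite IH; destruct (classic (A x)).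
  - rewrite !ind_in by (rewrite ?H; auto); reflexivity.
  - rewrite !ind_out by (rewrite ?H; auto); reflexivity.
Qed.

Lemma ev_mapsets_out {U V : Type} (g : (U -> Prop) -> V -> Prop) L y :
  (forall A, ~ g A y) -> ev (mapsets g L) y = 0.
Proof.
  intro H; induction L as [|[c A] L IH]; simpl; auto.
  rewrite IH, ind_out by apply H; ring.
Qed.

Lemma Phi_mapsets {U V W : Type} (mu : (V -> Prop) -> R) (mu' : (W -> Prop) -> R)
  (g : (U -> Prop) -> V -> Prop) (g' : (U -> Prop) -> W -> Prop) L :
  (forall A, mu (g A) = mu' (g' A)) -> Phi mu (mapsets g L) = Phi mu' (mapsets g' L).
Proof. intro H; induction L as [|[c A] L IH]; simpl; rewrite ?IH, ?H; auto. Qed.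

Lemma mapsets_id {U : Type} (L : simple U) : mapsets (fun A => A) L = L.
Proof. induction L as [|[c A] L IH]; simpl; rewrite ?IH; auto. Qed.

Lemma ev_restr_in {U : Type} (L : simple U) D x : D x -> ev (restr L D) x = ev L x.
Proof. intro Dx; apply ev_mapsets_in; tauto. Qed.

Lemma ev_restr_out {U : Type} (L : simple U) D x : ~ D x -> ev (restr L D) x = 0.
Proof. intro Dx; apply ev_mapsets_out; tauto. Qed.

Lemma ev_app {U : Type} (L1 L2 : simple U) x : ev (L1 ++ L2) x = ev L1 x + ev L2 x.
Proof. induction L1 as [|[c A] L IH]; simpl; [ring | rewrite IH; ring]. Qed.

Lemma Phi_app {U : Type} mu (L1 L2 : simple U) : Phi mu (L1 ++ L2) = Phi mu L1 + Phi mu L2.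
Proof. induction L1 as [|[c A] L IH]; simpl; [ring | rewrite IH; ring]. Qed.

Definition negL {U : Type} (L : simple U) : simple U := map (fun p => (- fst p, snd p)) L.

Lemma ev_neg {U : Type} (L : simple U) x : ev (negL L) x = - ev L x.
Proof. induction L as [|[c A] L IH]; simpl; [ring | rewrite IH; ring]. Qed.

Lemma Phi_neg {U : Type} mu (L : simple U) : Phi mu (negL L) = - Phi mu L.
Proof. induction L as [|[c A] L IH]; simpl; [ring | rewrite IH; ring]. Qed.

(* The elementary integral [Phi mu] is a positive linear functional: this is
   where finite additivity of mu is used. *)
Section ElementaryIntegral.
Context {U : Type} (mu : (U -> Prop) -> R) (Hmu : fa_prob_measure mu).

Lemma Phi_restr_full (L : simple U) : Phi mu (restr L (fun _ => True)) = Phi mu L.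
Proof.
  rewrite <- (mapsets_id L) at 2; apply Phi_mapsets; intro A.
  apply mu_ext; tauto.
Qed.

Lemma Phi_split (L : simple U) D E :
  Phi mu (restr L D) =
  Phi mu (restr L (fun x => D x /\ E x)) + Phi mu (restr L (fun x => D x /\ ~ E x)).
Proof.
  induction L as [|[c A] L IH]; simpl; [ring|].
  rewrite IH, (mu_split mu Hmu (fun x => A x /\ D x) E).
  rewrite (mu_ext mu (fun x => (A x /\ D x) /\ E x) (fun x => A x /\ D x /\ E x)),
    (mu_ext mu (fun x => (A x /\ D x) /\ ~ E x) (fun x => A x /\ D x /\ ~ E x)) by tauto.
  ring.
Qed.

(* Positivity, in the strengthened form needed for the induction on L:
   c 1_D + L >= 0 on D implies c mu(D) + Phi(L restricted to D) >= 0. *)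
Lemma Phi_restr_nonneg (L : simple U) : forall c D,
  (forall x, D x -> 0 <= c + ev L x) -> 0 <= c * mu D + Phi mu (restr L D).
Proof.
  induction L as [|[c1 A1] L IH]; intros c D H; simpl.
  - destruct (classic (exists x, D x)) as [[x Dx] | Nx].
    + specialize (H x Dx); simpl in H. destruct (mu_bounds mu Hmu D). nra.
    + rewrite (mu_null mu Hmu D) by (intros x Dx; eauto). lra.
  - assert (In : 0 <= (c + c1) * mu (fun x => D x /\ A1 x)
                      + Phi mu (restr L (fun x => D x /\ A1 x))).
    { apply IH; intros x [Dx Ax]; specialize (H x Dx); simpl in H.
      rewrite ind_in in H by auto; lra. }
    assert (Out : 0 <= c * mu (fun x => D x /\ ~ A1 x)
                       + Phi mu (restr L (fun x => D x /\ ~ A1 x))).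
    { apply IH; intros x [Dx Ax]; specialize (H x Dx); simpl in H.
      rewrite ind_out in H by auto; lra. }
    rewrite (Phi_split L D A1), (mu_split mu Hmu D A1).
    rewrite (mu_ext mu (fun x => A1 x /\ D x) (fun x => D x /\ A1 x)) by tauto.
    lra.
Qed.

Lemma Phi_nonneg (L : simple U) : (forall x, 0 <= ev L x) -> 0 <= Phi mu L.
Proof.
  intro H. assert (P := Phi_restr_nonneg L 0 (fun _ => True)).
  rewrite Phi_restr_full in P.
  enough (0 <= 0 * mu (fun _ => True) + Phi mu L) by lra.
  apply P; intros x _; specialize (H x); lra.
Qed.

Lemma Phi_mono (L1 L2 : simple U) :
  (forall x, ev L1 x <= ev L2 x) -> Phi mu L1 <= Phi mu L2.
Proof.
  intro H. assert (P := Phi_nonneg (L2 ++ negL L1)).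
  rewrite Phi_app, Phi_neg in P.
  enough (0 <= Phi mu L2 + - Phi mu L1) by lra.
  apply P; intro x; rewrite ev_app, ev_neg; specialize (H x); lra.
Qed.

Lemma Phi_le_restr (L : simple U) D :
  (forall x, ~ D x -> ev L x <= 0) -> Phi mu L <= Phi mu (restr L D).
Proof.
  intro H. rewrite <- (Phi_restr_full L) at 1.
  rewrite (Phi_split L _ D).
  replace (Phi mu (restr L (fun x => True /\ D x))) with (Phi mu (restr L D))
    by (apply Phi_mapsets; intro; apply mu_ext; tauto).
  enough (Phi mu (restr L (fun x => True /\ ~ D x)) <= Phi mu (@nil (R * (U -> Prop))))
    by (simpl in *; lra).
  apply Phi_mono; intro x; simpl; destruct (classic (D x)).
  - rewrite ev_restr_out by tauto; lra.
  - rewrite ev_restr_in by tauto; auto.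
Qed.

End ElementaryIntegral.

Definition unit_valued {U : Type} (h : U -> R) : Prop := forall x, 0 <= h x <= 1.

Definition below {U : Type} (h : U -> R) (L : simple U) : Prop := forall x, ev L x <= h x.

Definition lower_sums {U : Type} (mu : (U -> Prop) -> R) (h : U -> R) : R -> Prop :=
  fun r => exists L, below h L /\ r = Phi mu L.

Definition Integ {U : Type} (mu : (U -> Prop) -> R) (h : U -> R) : R :=
  epsilon (inhabits 0) (is_lub (lower_sums mu h)).

Definition const_simple {U : Type} (c : R) : simple U := (c, fun _ => True) :: nil.

Lemma ev_const {U : Type} c (x : U) : ev (const_simple c) x = c.
Proof. simpl; rewrite ind_in by auto; ring. Qed.

Section LowerIntegral.
Context {U : Type} (mu : (U -> Prop) -> R) (Hmu : fa_prob_measure mu).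

Lemma Phi_const c : Phi mu (@const_simple U c) = c.
Proof. simpl; rewrite (mu_full mu Hmu); ring. Qed.

(* The supremum exists since every lower sum is at most Phi(1) = 1. *)
Lemma Integ_lub h : unit_valued h -> is_lub (lower_sums mu h) (Integ mu h).
Proof.
  intro Hh; unfold Integ; apply epsilon_spec.
  destruct (completeness (lower_sums mu h)) as [m Hm]; [| | now exists m].
  - exists 1; intros r [L [HL ->]]. rewrite <- (Phi_const 1).
    apply (Phi_mono mu Hmu); intro x; rewrite ev_const.
    specialize (HL x); specialize (Hh x); lra.
  - exists 0, nil; split; auto. intro x; simpl; apply Hh.
Qed.

Lemma Integ_ge h L : unit_valued h -> below h L -> Phi mu L <= Integ mu h.
Proof. intros Hh HL; apply (Integ_lub h Hh); exists L; auto. Qed.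

Lemma Integ_le h b :
  unit_valued h -> (forall L, below h L -> Phi mu L <= b) -> Integ mu h <= b.
Proof. intros Hh HL; apply (Integ_lub h Hh); intros r [L [HL' ->]]; auto. Qed.

Lemma Integ_le_Phi h L' :
  unit_valued h -> (forall x, h x <= ev L' x) -> Integ mu h <= Phi mu L'.
Proof.
  intros Hh H; apply Integ_le; auto; intros L HL.
  apply (Phi_mono mu Hmu); intro x; specialize (HL x); specialize (H x); lra.
Qed.

Lemma Integ_bounds h : unit_valued h -> 0 <= Integ mu h <= 1.
Proof.
  intro Hh; split.
  - apply (Integ_ge h nil); auto; intro x; apply Hh.
  - rewrite <- (Phi_const 1); apply Integ_le_Phi; auto.
    intro x; rewrite ev_const; apply Hh.
Qed.

Lemma Integ_one : Integ mu (fun _ : U => 1) = 1.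
Proof.
  assert (H1 : unit_valued (fun _ : U => 1)) by (intro; lra).
  transitivity (Phi mu (@const_simple U 1)); [|apply Phi_const]. apply Rle_antisym.
  - apply Integ_le_Phi; auto; intro x; rewrite ev_const; lra.
  - apply Integ_ge; auto; intro x; rewrite ev_const; lra.
Qed.

End LowerIntegral.

(* The staircase sum_{k=1}^{m} (1/n) 1[h >= k/n]: a simple function below h
   approximating it within 1/n, used to prove additivity of the integral. *)
Fixpoint staircase {U : Type} (h : U -> R) (n m : nat) : simple U :=
  match m with
  | O => nil
  | S m' => (/ INR n, fun x => INR (S m') / INR n <= h x) :: staircase h n m'
  end.

Lemma staircase_partial {U : Type} (h : U -> R) n x : (0 < n)%nat -> 0 <= h x ->
  forall m, ev (staircase h n m) x <= Rmin (h x) (INR m / INR n) /\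
            Rmin (h x - / INR n) (INR m / INR n) <= ev (staircase h n m) x.
Proof.
  intros Hn H0. assert (Hn' : 0 < INR n) by (apply lt_0_INR; auto).
  assert (Hd : 0 < / INR n) by (apply Rinv_0_lt_compat; auto).
  induction m as [|m [IH1 IH2]].
  - simpl; unfold Rdiv; rewrite Rmult_0_l, Rmin_right by auto.
    split; [lra|]; unfold Rmin; destruct Rle_dec; lra.
  - cbn [staircase ev].
    replace (INR (S m) / INR n) with (INR m / INR n + / INR n)
      by (rewrite S_INR; field; lra).
    set (a := INR m / INR n) in *; set (d := / INR n) in *.
    destruct (Rle_dec (a + d) (h x)) as [Hle | Hlt].
    + rewrite ind_in by auto; unfold Rmin in *.
      repeat destruct Rle_dec; split; lra.
    + rewrite ind_out by auto; unfold Rmin in *.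
      repeat destruct Rle_dec; split; lra.
Qed.

Lemma staircase_bounds {U : Type} (h : U -> R) n x : (0 < n)%nat -> 0 <= h x <= 1 ->
  ev (staircase h n n) x <= h x /\ h x - / INR n <= ev (staircase h n n) x.
Proof.
  intros Hn H. destruct (staircase_partial h n x Hn (proj1 H) n) as [A B].
  assert (Hn' : 0 < INR n) by (apply lt_0_INR; auto).
  replace (INR n / INR n) with 1 in * by (field; lra).
  assert (0 < / INR n) by (apply Rinv_0_lt_compat; auto).
  unfold Rmin in *; repeat destruct Rle_dec; lra.
Qed.

Section Additivity.
Context {U : Type} (mu : (U -> Prop) -> R) (Hmu : fa_prob_measure mu).

(* Finite additivity of the lower integral; "<=" uses the staircase
   approximations from above, ">=" is the superadditivity of suprema. *)
Lemma Integ_add (h1 h2 : U -> R) :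
  unit_valued h1 -> unit_valued h2 -> unit_valued (fun x => h1 x + h2 x) ->
  Integ mu (fun x => h1 x + h2 x) = Integ mu h1 + Integ mu h2.
Proof.
  intros P1 P2 P12. apply Rle_antisym.
  - apply Rle_plus_epsilon; intros eps Heps.
    destruct (archimed_cor1 (eps / 2)) as [n [Hn1 Hn2]]; [lra|].
    assert (S1 : forall x, ev (staircase h1 n n) x <= h1 x /\
                           h1 x - / INR n <= ev (staircase h1 n n) x)
      by (intro; apply staircase_bounds; auto).
    assert (S2 : forall x, ev (staircase h2 n n) x <= h2 x /\
                           h2 x - / INR n <= ev (staircase h2 n n) x)
      by (intro; apply staircase_bounds; auto).
    set (L := staircase h1 n n ++ staircase h2 n n ++ const_simple (2 / INR n)).
    assert (I1 : Phi mu (staircase h1 n n) <= Integ mu h1)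
      by (apply Integ_ge; auto; intro x; apply S1).
    assert (I2 : Phi mu (staircase h2 n n) <= Integ mu h2)
      by (apply Integ_ge; auto; intro x; apply S2).
    apply Rle_trans with (Phi mu L).
    + apply Integ_le_Phi; auto; intro x.
      unfold L; rewrite !ev_app, ev_const.
      specialize (S1 x); specialize (S2 x); unfold Rdiv; lra.
    + unfold L; rewrite !Phi_app, (Phi_const mu Hmu); unfold Rdiv in *; lra.
  - assert (Sum : forall L1 L2, below h1 L1 -> below h2 L2 ->
              Phi mu L1 + Phi mu L2 <= Integ mu (fun x => h1 x + h2 x)).
    { intros L1 L2 A1 A2; rewrite <- Phi_app; apply Integ_ge; auto.
      intro x; rewrite ev_app; specialize (A1 x); specialize (A2 x); lra. }
    enough (Integ mu h2 <= Integ mu (fun x => h1 x + h2 x) - Integ mu h1) by lra.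
    apply Integ_le; auto; intros L2 A2.
    enough (Integ mu h1 <= Integ mu (fun x => h1 x + h2 x) - Phi mu L2) by lra.
    apply Integ_le; auto; intros L1 A1; specialize (Sum L1 L2 A1 A2); lra.
Qed.

End Additivity.

Section Transfer.
Context {U : Type} (mu : (U -> Prop) -> R) (Hmu : fa_prob_measure mu)
  (f : U -> U) (X : U -> Prop) (h k : U -> R).
Hypotheses (Hinj : injective_on f X) (Hinv : image_invariant mu f)
  (Hh : unit_valued h) (Hk : unit_valued k)
  (h_supp : forall x, ~ X x -> h x = 0) (k_on : forall a, X a -> k (f a) = h a)
  (k_supp : forall y, ~ image f X y -> k y = 0).

(* Pull a simple function below k back along f. *)
Lemma Integ_transfer_le : Integ mu k <= Integ mu h.
Proof.
  apply Integ_le; auto; intros L HL.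
  set (L' := mapsets (fun A a => X a /\ A (f a)) L).
  apply Rle_trans with (Phi mu (restr L (image f X))).
  { apply (Phi_le_restr mu Hmu); intros y Hy; rewrite <- (k_supp y Hy); apply HL. }
  replace (Phi mu (restr L (image f X))) with (Phi mu L').
  - apply Integ_ge; auto; intro a; destruct (classic (X a)) as [Xa | Xa].
    + unfold L'; rewrite (ev_mapsets_in _ L (f a)) by tauto.
      rewrite <- (k_on a Xa); apply HL.
    + unfold L'; rewrite ev_mapsets_out by tauto; apply Hh.
  - apply Phi_mapsets; intro A.
    rewrite <- Hinv by (intros a b [Xa _] [Xb _]; apply Hinj; auto).
    apply mu_ext; intro y; split.
    + intros [a [[Xa Aa] ->]]; split; auto; exists a; auto.
    + intros [Ay [a [Xa ->]]]; exists a; auto.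
Qed.

(* Push a simple function below h forward along f. *)
Lemma Integ_transfer_ge : Integ mu h <= Integ mu k.
Proof.
  apply Integ_le; auto; intros L HL.
  set (L' := mapsets (fun A => image f (fun a => A a /\ X a)) L).
  apply Rle_trans with (Phi mu (restr L X)).
  { apply (Phi_le_restr mu Hmu); intros x Hx; rewrite <- (h_supp x Hx); apply HL. }
  replace (Phi mu (restr L X)) with (Phi mu L').
  - apply Integ_ge; auto; intro y; destruct (classic (image f X y)) as [[a [Xa ->]] | Hy].
    + unfold L'; rewrite (ev_mapsets_in _ L a).
      * rewrite k_on by auto; apply HL.
      * intro A; split.
        -- intros [a' [[Aa' Xa'] E]]; rewrite (Hinj a a'); auto.
        -- intro Aa; exists a; auto.
    + unfold L'; rewrite ev_mapsets_out
        by (intros A [a [[_ Xa] ->]]; apply Hy; exists a; auto).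
      apply Hk.
  - apply Phi_mapsets; intro A; apply Hinv.
    intros a b [_ Xa] [_ Xb]; apply Hinj; auto.
Qed.

Lemma Integ_transfer : Integ mu k = Integ mu h.
Proof. apply Rle_antisym; [apply Integ_transfer_le | apply Integ_transfer_ge]. Qed.

End Transfer.

(* A point survives n peelings only if its fibre
   in Y has more than n points. *)
Section Peeling.
Context {U : Type} (f : U -> U) (a0 : U).

Definition rep (Y : U -> Prop) (y : U) : U :=
  epsilon (inhabits a0) (fun a => Y a /\ f a = y).

Definition transversal (Y : U -> Prop) : U -> Prop := fun a => Y a /\ rep Y (f a) = a.

Fixpoint peel (Y : U -> Prop) (n : nat) : U -> Prop :=
  match n with
  | O => Y
  | S n => fun a => peel Y n a /\ ~ transversal (peel Y n) a
  end.

Lemma rep_spec Y a : Y a -> Y (rep Y (f a)) /\ f (rep Y (f a)) = f a.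
Proof.
  intro Ya; apply (epsilon_spec (inhabits a0) (fun a' => Y a' /\ f a' = f a)); eauto.
Qed.

Lemma transversal_rep Y a : Y a -> transversal Y (rep Y (f a)).
Proof. intro Ya; destruct (rep_spec Y a Ya) as [A B]; split; auto; rewrite B; auto. Qed.

Lemma transversal_inj Y : injective_on f (transversal Y).
Proof. intros a b [_ Ha] [_ Hb] E; rewrite <- Ha, <- Hb, E; auto. Qed.

Lemma peel_antitone Y n m a : (n <= m)%nat -> peel Y m a -> peel Y n a.
Proof. induction 1; simpl; auto; intros [Pm _]; auto. Qed.

Lemma peel_sub Y n a : peel Y n a -> Y a.
Proof. apply (peel_antitone Y 0 n a); lia. Qed.

(* Counting with an invariant measure: each transversal of a subset of W has
   measure at most mu(f(W)), and the images of the successive transversals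
   of Y all cover f(peel Y n). *)
Section Counting.
Context (mu : (U -> Prop) -> R) (Hmu : fa_prob_measure mu) (Hinv : image_invariant mu f).

Lemma measure_le_peel W n : mu W <= INR n * mu (image f W) + mu (peel W n).
Proof.
  induction n as [|n IH]; [simpl; lra|].
  assert (Tn : mu (transversal (peel W n)) <= mu (image f W)).
  { rewrite <- Hinv by apply transversal_inj.
    apply (mu_mono mu Hmu); intros y [a [[Pa _] ->]].
    exists a; split; auto; exact (peel_sub W n a Pa). }
  rewrite (mu_split mu Hmu (peel W n) (transversal (peel W n))) in IH.
  rewrite (mu_ext mu (fun a => peel W n a /\ transversal (peel W n) a)
                     (transversal (peel W n))) in IH by firstorder.
  rewrite S_INR; cbn [peel]; lra.
Qed.

Lemma peel_image_bound Y n : INR n * mu (image f (peel Y n)) <= 1.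
Proof.
  set (v := mu (image f (peel Y n))).
  set (Z := fun j a => transversal (peel Y j) a /\ image f (peel Y n) (f a)).
  assert (HZ : forall j, (j <= n)%nat -> mu (Z j) = v).
  { intros j Hj; unfold v.
    rewrite <- Hinv by (intros a b [Ha _] [Hb _]; apply (transversal_inj _ a b Ha Hb)).
    apply mu_ext; intro y; split.
    - intros [a [[Pa [a' [Pa' E]]] ->]]; exists a'; auto.
    - intros [a [Pa ->]].
      assert (Pj : peel Y j a) by (apply (peel_antitone Y j n a); auto).
      destruct (rep_spec (peel Y j) a Pj) as [_ E].
      exists (rep (peel Y j) (f a)); split; [split|].
      * apply transversal_rep; auto.
      * rewrite E; exists a; auto.
      * rewrite E; reflexivity. }
  set (Zu := fun m a => exists j, (j < m)%nat /\ Z j a).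
  assert (HU : forall m, (m <= n)%nat -> mu (Zu m) = INR m * v).
  { induction m as [|m IH]; intro Hm.
    - simpl; rewrite Rmult_0_l; apply (mu_null mu Hmu); intros a [j [Hj _]]; lia.
    - rewrite (mu_ext mu (Zu (S m)) (fun a => Zu m a \/ Z m a)).
      + rewrite (mu_disj mu Hmu); [rewrite IH, HZ, S_INR by lia; ring|].
        intros a [j [Hj [Tj _]]] [[Pm _] _].
        assert (Pj1 : peel Y (S j) a) by (apply (peel_antitone Y (S j) m a); auto).
        exact (proj2 Pj1 Tj).
      + intro a; unfold Zu; split.
        * intros [j [Hj Zj]]; destruct (Nat.eq_dec j m) as [-> | Hne]; [right | left]; auto.
          exists j; split; auto; lia.
        * intros [[j [Hj Zj]] | Zm]; [exists j | exists m]; split; auto; lia. }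
  rewrite <- (HU n) by lia; apply (mu_bounds mu Hmu).
Qed.

End Counting.

(* Fibres are small when each point of W carries a set ("slice") of mass at
   least eps, slices of distinct points of the same fibre being disjoint:
   a fibre then has fewer than 1/eps points, so N peelings empty W as soon
   as (N+1) eps > 1. *)
Section SmallFibres.
Context {V : Type} (muV : (V -> Prop) -> R) (HV : fa_prob_measure muV)
  (g : U -> V -> Prop) (eps : R) (W : U -> Prop).
Hypotheses (slice_large : forall a, W a -> eps <= muV (g a))
  (slice_disjoint : forall a a' b, W a -> W a' -> f a = f a' -> g a b -> g a' b -> a = a').

Definition peeled_slices (n : nat) (a : U) : V -> Prop :=
  fun b => exists a', W a' /\ ~ peel W n a' /\ f a' = f a /\ g a' b.

Lemma peeled_slices_grow n a : peel W n a -> INR n * eps <= muV (peeled_slices n a).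
Proof.
  revert a; induction n as [|n IH]; intros a Pa.
  - simpl; rewrite Rmult_0_l; apply (mu_bounds muV HV).
  - destruct Pa as [Pa NT].
    set (p := rep (peel W n) (f a)).
    destruct (rep_spec (peel W n) a Pa) as [Pp Ep]; fold p in Pp, Ep.
    assert (Wp : W p) by exact (peel_sub W n p Pp).
    assert (Grow : muV (fun b => peeled_slices n a b \/ g p b) <= muV (peeled_slices (S n) a)).
    { apply (mu_mono muV HV); intros b [[a' [Wa' [NP [E gb]]]] | gb].
      - exists a'; repeat split; auto; intros [P' _]; auto.
      - exists p; repeat split; auto; intros [_ NT']; apply NT'; apply transversal_rep; auto. }
    rewrite (mu_disj muV HV) in Grow.
    + specialize (IH a Pa); specialize (slice_large p Wp); rewrite S_INR; lra.
    + intros b [a' [Wa' [NP [E gb]]]] gpb.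
      apply NP; rewrite (slice_disjoint a' p b); auto; congruence.
Qed.

Lemma peel_empty N : 1 < (INR N + 1) * eps -> forall a, ~ peel W N a.
Proof.
  intros HN a Pa. assert (G := peeled_slices_grow N a Pa).
  assert (Wa : W a) by exact (peel_sub W N a Pa).
  assert (D : muV (fun b => peeled_slices N a b \/ g a b)
              = muV (peeled_slices N a) + muV (g a)).
  { apply (mu_disj muV HV); intros b [a' [Wa' [NP [E gb]]]] gab.
    apply NP; rewrite (slice_disjoint a' a b); auto. }
  destruct (mu_bounds muV HV (fun b => peeled_slices N a b \/ g a b)).
  specialize (slice_large a Wa); nra.
Qed.

End SmallFibres.
End Peeling.

Lemma zero_of_small (x : R) : (forall N, (0 < N)%nat -> Rabs x <= 2 / INR N) -> x = 0.
Proof.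
  intro H. enough (Rabs x <= 0) by (unfold Rabs in *; destruct Rcase_abs; lra).
  apply Rle_plus_epsilon; intros e He.
  destruct (archimed_cor1 (e / 2)) as [N [H1 H2]]; [lra|].
  specialize (H N H2); unfold Rdiv in *; lra.
Qed.

Section ProductMeasure.
Context {U V : Type} (opU : U -> U -> U) (opV : V -> V -> V)
  (muU : (U -> Prop) -> R) (muV : (V -> Prop) -> R).
Hypotheses (HU : fa_prob_measure muU) (HV : fa_prob_measure muV)
  (IU : left_fairly_invariant opU muU) (IV : left_fairly_invariant opV muV).

Definition slice (C : U * V -> Prop) (a : U) : V -> Prop := fun b => C (a, b).
Definition proj (C : U * V -> Prop) : U -> Prop := fun a => exists b, C (a, b).
Definition slice_mass (C : U * V -> Prop) (a : U) : R := muV (slice C a).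
Definition nu (C : U * V -> Prop) : R := Integ muU (slice_mass C).

Lemma slice_mass_unit C : unit_valued (slice_mass C).
Proof. intro a; apply (mu_bounds muV HV). Qed.

Lemma nu_add (A B : U * V -> Prop) :
  (forall p, A p -> B p -> False) -> nu (fun p => A p \/ B p) = nu A + nu B.
Proof.
  intro H; unfold nu.
  assert (E : slice_mass (fun p => A p \/ B p) = fun a => slice_mass A a + slice_mass B a).
  { apply functional_extensionality; intro a; apply (mu_disj muV HV); eauto. }
  rewrite E; apply (Integ_add muU HU); try apply slice_mass_unit.
  rewrite <- E; apply slice_mass_unit.
Qed.

Lemma nu_fa : fa_prob_measure nu.
Proof.
  split; [|split].
  - intro C; apply (Integ_bounds muU HU), slice_mass_unit.
  - unfold nu; rewrite <- (Integ_one muU HU); f_equal.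
    apply functional_extensionality; intro a; apply (mu_full muV HV).
  - exact nu_add.
Qed.

Lemma nu_le_proj (C : U * V -> Prop) (Y : U -> Prop) :
  (forall a, proj C a -> Y a) -> nu C <= muU Y.
Proof.
  intro H; unfold nu.
  replace (muU Y) with (Phi muU ((1, Y) :: nil)) by (simpl; ring).
  apply (Integ_le_Phi muU HU); [apply slice_mass_unit|]; intro a; simpl.
  destruct (classic (Y a)).
  - rewrite ind_in by auto; destruct (slice_mass_unit C a); lra.
  - rewrite ind_out by auto; unfold slice_mass.
    rewrite (mu_null muV HV) by (intros b Cb; apply H0, H; exists b; exact Cb). lra.
Qed.

Lemma nu_le_eps (C : U * V -> Prop) eps (W : U -> Prop) :
  0 <= eps -> (forall a, slice_mass C a <= eps \/ W a) -> nu C <= eps + muU W.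
Proof.
  intros He H; unfold nu.
  replace (eps + muU W) with (Phi muU (const_simple eps ++ (1, W) :: nil))
    by (rewrite Phi_app, (Phi_const muU HU); simpl; ring).
  apply (Integ_le_Phi muU HU); [apply slice_mass_unit|]; intro a.
  rewrite ev_app, ev_const; simpl; destruct (slice_mass_unit C a).
  destruct (classic (W a)) as [Wa | Wa].
  - rewrite ind_in by auto; lra.
  - rewrite ind_out by auto; destruct (H a); [lra | contradiction].
Qed.

Section Translation.
Variables (s : U) (t : V).

Definition shift (D : U * V -> Prop) : U * V -> Prop :=
  left_translate (prod_op opU opV) (s, t) D.

Lemma shift_iff D y b :
  shift D (y, b) <-> exists a b', D (a, b') /\ y = opU s a /\ b = opV t b'.
Proof.
  unfold shift, left_translate, prod_op; split.
  - intros [[a b'] [Hd E]]; simpl in E; injection E as -> ->; eauto.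
  - intros [a [b' [Hd [-> ->]]]]; exists (a, b'); auto.
Qed.

(* If s acts injectively on the projection of D and (s,t) on D, then nu is
   invariant: the slice of the shifted set over s a is t times the slice over
   a, and the slices are then transported along s (Integ_transfer). *)
Lemma nu_shift_piece (D : U * V -> Prop) :
  injective_on (prod_op opU opV (s, t)) D -> injective_on (opU s) (proj D) ->
  nu (shift D) = nu D.
Proof.
  intros HD HpD; unfold nu.
  apply (Integ_transfer muU HU (opU s) (proj D)); auto; try apply slice_mass_unit.
  - exact (IU s).
  - intros a Na; apply (mu_null muV HV); intros b Db; apply Na; exists b; auto.
  - intros a Pa; unfold slice_mass.
    rewrite (mu_ext muV _ (left_translate opV t (slice D a))).
    + apply IV; intros b b' Db Db' E.
      assert (Ep := HD (a, b) (a, b') Db Db'); unfold prod_op in Ep; simpl in Ep.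
      rewrite E in Ep; injection (Ep eq_refl); auto.
    + intro b; unfold slice; rewrite shift_iff; split.
      * intros [a' [b' [Db' [Ea ->]]]].
        assert (a' = a) as ->
          by (apply HpD; [exists b'; exact Db' | exact Pa | symmetry; exact Ea]).
        exists b'; auto.
      * intros [b' [Db' ->]]; exists a, b'; auto.
  - intros y Ny; apply (mu_null muV HV); intros b Sb.
    apply shift_iff in Sb; destruct Sb as [a [b' [Db' [-> _]]]].
    apply Ny; exists a; split; auto; exists b'; auto.
Qed.

(* For a set C on which (s,t) acts injectively, peel the projection of C
   under x |-> s x: C splits into the pieces over the successive transversals,
   on each of which nu is invariant by nu_shift_piece, plus a remainder
   [layer C M].  The remainder is negligible for large M, hence nu(sC) = nu(C). *)
Section Invariance.
Variable (C : U * V -> Prop).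
Hypothesis (Hinj : injective_on (prod_op opU opV (s, t)) C).

Definition layer (n : nat) : U * V -> Prop :=
  fun p => C p /\ peel (opU s) s (proj C) n (fst p).
Definition piece (n : nat) : U * V -> Prop :=
  fun p => C p /\ transversal (opU s) s (peel (opU s) s (proj C) n) (fst p).

Lemma inj_components a b a' b' : C (a, b) -> C (a', b') ->
  opU s a = opU s a' -> opV t b = opV t b' -> a = a' /\ b = b'.
Proof.
  intros H1 H2 E1 E2; assert (E := Hinj (a, b) (a', b') H1 H2).
  unfold prod_op in E; simpl in E; rewrite E1, E2 in E.
  injection (E eq_refl); auto.
Qed.

Lemma nu_shift_union (D1 D2 : U * V -> Prop) :
  (forall p, D1 p -> C p) -> (forall p, D2 p -> C p) -> (forall p, D1 p -> D2 p -> False) ->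
  nu (shift (fun p => D1 p \/ D2 p)) = nu (shift D1) + nu (shift D2).
Proof.
  intros S1 S2 Dis; rewrite <- nu_add.
  - apply (mu_ext nu); intros [y b]; rewrite !shift_iff; firstorder.
  - intros [y b] H1 H2; rewrite shift_iff in H1, H2.
    destruct H1 as [a1 [b1 [D1p [-> ->]]]], H2 as [a2 [b2 [D2p [E1 E2]]]].
    destruct (inj_components a1 b1 a2 b2) as [<- <-]; eauto.
Qed.

Lemma layer_step n p : layer n p <-> piece n p \/ layer (S n) p.
Proof.
  unfold layer, piece; simpl.
  destruct (classic (transversal (opU s) s (peel (opU s) s (proj C) n) (fst p))) as [Tp | Tp].
  - split; [tauto|]; intros [[Cp [Pp _]] | [Cp [Pp _]]]; auto.
  - tauto.
Qed.

Lemma piece_layer_disjoint n p : piece n p -> layer (S n) p -> False.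
Proof. intros [_ Tp] [_ [_ NTp]]; auto. Qed.

Lemma nu_shift_piece_n n : nu (shift (piece n)) = nu (piece n).
Proof.
  apply nu_shift_piece.
  - intros p q [Cp _] [Cq _]; apply Hinj; auto.
  - intros a a' [b [_ Ta]] [b' [_ Ta']]; apply (transversal_inj (opU s) s _ a a' Ta Ta').
Qed.

Lemma defect_layer n : nu (shift C) - nu C = nu (shift (layer n)) - nu (layer n).
Proof.
  induction n as [|n IH].
  - replace (layer 0) with C; [reflexivity|].
    apply set_ext; intros [a b]; unfold layer, proj; simpl; split; [|tauto].
    intro Cab; split; eauto.
  - rewrite IH.
    assert (E : layer n = fun p => piece n p \/ layer (S n) p)
      by (apply set_ext, layer_step).
    rewrite E, nu_shift_union, nu_add, nu_shift_piece_n.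
    + ring.
    + apply piece_layer_disjoint.
    + intros p [Cp _]; auto.
    + intros p [Cp _]; auto.
    + apply piece_layer_disjoint.
Qed.

Lemma shift_layer_small M :
  nu (shift (layer M)) <= muU (image (opU s) (peel (opU s) s (proj C) M)).
Proof.
  apply nu_le_proj; intros y [b Sb]; apply shift_iff in Sb.
  destruct Sb as [a [b' [[_ Pa] [-> _]]]]; exists a; auto.
Qed.

(* Points of the layer with slices of mass >= eps lie in fibres with fewer than
   1/eps such points (slices in one fibre are disjoint by injectivity of (s,t)),
   so N peelings exhaust them and they have measure <= N muU(s R_M). *)
Lemma layer_small M N eps : 0 <= eps -> 1 < (INR N + 1) * eps ->
  nu (layer M) <= eps + INR N * muU (image (opU s) (peel (opU s) s (proj C) M)).
Proof.
  intros He HN.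
  set (RM := peel (opU s) s (proj C) M).
  set (W := fun a => RM a /\ eps <= slice_mass C a).
  apply Rle_trans with (eps + muU W).
  { apply nu_le_eps; auto; intro a; destruct (classic (RM a)) as [Ra | Ra].
    - unfold slice_mass at 1.
      rewrite (mu_ext muV _ (slice C a)) by (unfold slice, layer; tauto).
      destruct (Rle_dec eps (slice_mass C a)) as [Big | Small].
      + right; split; auto.
      + left; unfold slice_mass in Small; lra.
    - left; unfold slice_mass; rewrite (mu_null muV HV) by (intros b [_ Pb]; auto); lra. }
  assert (Hinv : image_invariant muU (opU s)) by exact (IU s).
  assert (Peel := measure_le_peel (opU s) s muU HU Hinv W N).
  rewrite (mu_null muU HU (peel (opU s) s W N)) in Peel.
  - assert (muU (image (opU s) W) <= muU (image (opU s) RM)).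
    { apply (mu_mono muU HU); intros y [a [[Ra _] ->]]; exists a; auto. }
    assert (0 <= INR N) by apply pos_INR. nra.
  - apply (peel_empty (opU s) s muV HV (slice C) eps W); auto.
    + intros a [_ Ha]; exact Ha.
    + intros a a' b [Ra _] [Ra' _] E Cb Cb'.
      apply (inj_components a b a' b); auto.
Qed.

(* With M = N^2 and eps = 1/N: M muU(s R_M) <= 1 by peel_image_bound, so the
   defect of the M-th layer lies in [-2/N, 1/N]. *)
Lemma nu_shift_invariant : nu (shift C) = nu C.
Proof.
  enough (nu (shift C) - nu C = 0) by lra.
  apply zero_of_small; intros N HN.
  assert (HN' : 1 <= INR N) by (apply (le_INR 1); lia).
  set (M := (N * N)%nat).
  set (v := muU (image (opU s) (peel (opU s) s (proj C) M))).
  assert (Hv : INR M * v <= 1) by exact (peel_image_bound (opU s) s muU HU (IU s) (proj C) M).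
  assert (HM : INR M = INR N * INR N) by apply mult_INR.
  assert (v0 : 0 <= v) by apply (mu_bounds muU HU).
  assert (Hv' : INR N * v <= / INR N).
  { apply Rmult_le_reg_l with (INR N); [lra|]. field_simplify; nra. }
  assert (Small1 := shift_layer_small M).
  assert (Small2 := layer_small M N (/ INR N)).
  destruct nu_fa as [nu_bounds _].
  assert (B1 := nu_bounds (shift (layer M))); assert (B2 := nu_bounds (layer M)).
  rewrite (defect_layer M).
  assert (Heps : 1 < (INR N + 1) * / INR N).
  { replace ((INR N + 1) * / INR N) with (1 + / INR N) by (field; lra).
    assert (0 < / INR N) by (apply Rinv_0_lt_compat; lra); lra. }
  assert (0 <= / INR N) by (left; apply Rinv_0_lt_compat; lra).
  specialize (Small2 ltac:(auto) Heps); fold v in Small1, Small2.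
  assert (v <= / INR N) by nra.
  unfold Rabs; destruct Rcase_abs; unfold Rdiv; lra.
Qed.

End Invariance.
End Translation.

Lemma nu_left_invariant : left_fairly_invariant (prod_op opU opV) nu.
Proof. intros [s t] C HC; exact (nu_shift_invariant s t C HC). Qed.

End ProductMeasure.

Lemma left_fairly_amenable_prod (U V : Type) (opU : U -> U -> U) (opV : V -> V -> V) :
  left_fairly_amenable opU -> left_fairly_amenable opV ->
  left_fairly_amenable (prod_op opU opV).
Proof.
  intros [muU [HU IU]] [muV [HV IV]].
  exists (nu muU muV); split.
  - apply nu_fa; auto.
  - apply nu_left_invariant; auto.
Qed.

(* The right case is the left case for the opposite operations x * y := y x. *)
Theorem mainTheorem11 (S T : Type) (opS : S -> S -> S) (opT : T -> T -> T)
  (hS : is_semigroup opS) (hT : is_semigroup opT) :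
  (left_fairly_amenable opS -> left_fairly_amenable opT ->
     left_fairly_amenable (prod_op opS opT)) /\
  (right_fairly_amenable opS -> right_fairly_amenable opT ->
     right_fairly_amenable (prod_op opS opT)).
Proof.
  split.
  - apply left_fairly_amenable_prod.
  - exact (left_fairly_amenable_prod S T (fun x y => opS y x) (fun x y => opT y x)).
Qed.
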